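(* Let $A,B,C$ be non-degenerate square $\{0,1\}$-matrices and let $\varphi_1:X_A\to X_B$, $\varphi_2:X_B\to X_C$, $\varphi_3:X_A\to X_C$ be elementary conjugacies. Set $R_i=R_{\varphi_i}$, $S_i=S_{\varphi_i}$ for $i=1,2,3$. Then $\varphi_2\circ\varphi_1=\varphi_3$ if and only if $R_1R_2=R_3$, $R_2S_3=S_1$ and $S_3R_1=S_2$.
   Context: Non-degenerate: no zero rows or columns; products are integer matrix products. $X_A=\{x\in\{1,\dots,m\}^{\mathbb Z}:A_{x_\ell,x_{\ell+1}}=1\ \forall\ell\}$ with the left shift; a conjugacy is a shift-commuting homeomorphism. A conjugacy $\varphi:X_A\to X_B$ is elementary if there are $\varphi_{\mathrm{loc}}$ (on pairs $(a,a')$ with $A_{a,a'}=1$) and $\varphi^{-1}_{\mathrm{loc}}$ (on pairs $(b,b')$ with $B_{b,b'}=1$) with $\varphi(x)_i=\varphi_{\mathrm{loc}}(x_i,x_{i+1})$ and $\varphi^{-1}(y)_i=\varphi^{-1}_{\mathrm{loc}}(y_{i-1},y_i)$. For such $\varphi$, $R_\varphi$ is the $\{0,1\}$-matrix with $(R_\varphi)_{a,b}=1$ iff $\varphi_{\mathrm{loc}}(a,a')=b$ for some allowed $a'$, and $S_\varphi$ is the $\{0,1\}$-matrix with $(S_\varphi)_{b,a}=1$ iff $\varphi^{-1}_{\mathrm{loc}}(b,b')=a$ for some allowed $b'$. *)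

From mathcomp Require Import all_boot all_order all_algebra.
Set Implicit Arguments. Unset Strict Implicit. Unset Printing Implicit Defensive.
Import Order.TTheory GRing.Theory Num.Theory.
Local Open Scope ring_scope.

Definition pt (m : nat) := int -> 'I_m.

Definition zero_one (m : nat) (A : 'M[int]_m) : Prop :=
  forall i j, A i j = 0 \/ A i j = 1.
Definition nondeg_mx (m : nat) (A : 'M[int]_m) : Prop :=
  (forall i, exists j, A i j != 0) /\ (forall j, exists i, A i j != 0).

Definition inX (m : nat) (A : 'M[int]_m) (x : pt m) : Prop :=
  forall l : int, A (x l) (x (l + 1)) = 1.

Definition shift (m : nat) (x : pt m) : pt m := fun i => x (i + 1).

(* Continuity of phi on X_A for the (subspace of the) product topology of
   discrete alphabets: cylinder neighbourhoods. *)
Definition continuous_on (m n : nat) (A : 'M[int]_m) (phi : pt m -> pt n) : Prop :=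
  forall x, inX A x -> forall N : nat, exists M : nat,
    forall y, inX A y -> (forall i : int, `|i| <= M%:Z -> y i = x i) ->
      forall i : int, `|i| <= N%:Z -> phi y i = phi x i.

Definition conjugacy (m n : nat) (A : 'M[int]_m) (B : 'M[int]_n)
    (phi : pt m -> pt n) : Prop :=
  [/\ forall x, inX A x -> inX B (phi x),
      forall x, inX A x -> forall i, phi (shift x) i = shift (phi x) i,
      continuous_on A phi &
      exists psi : pt n -> pt m,
        [/\ forall y, inX B y -> inX A (psi y),
            forall x, inX A x -> forall i, psi (phi x) i = x i,
            forall y, inX B y -> forall i, phi (psi y) i = y i &
            continuous_on B psi]].

Definition elementary (m n : nat) (A : 'M[int]_m) (B : 'M[int]_n)
    (phi : pt m -> pt n) (loc : 'I_m -> 'I_m -> 'I_n)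
    (iloc : 'I_n -> 'I_n -> 'I_m) : Prop :=
  [/\ conjugacy A B phi,
      forall x, inX A x -> forall i, phi x i = loc (x i) (x (i + 1)) &
      forall x, inX A x -> forall i, x i = iloc (phi x (i - 1)) (phi x i)].

Definition Rmat (m n : nat) (A : 'M[int]_m) (loc : 'I_m -> 'I_m -> 'I_n)
  : 'M[int]_(m, n) :=
  \matrix_(a, b) (if [exists a', (A a a' == 1) && (loc a a' == b)] then 1 else 0).
Definition Smat (m n : nat) (B : 'M[int]_n) (iloc : 'I_n -> 'I_n -> 'I_m)
  : 'M[int]_(n, m) :=
  \matrix_(b, a) (if [exists b', (B b b' == 1) && (iloc b b' == a)] then 1 else 0).

From mathcomp Require Import all_boot all_order all_algebra.
Import GRing.Theory.
Local Open Scope ring_scope.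

Set Implicit Arguments. Unset Strict Implicit.

(* Everything reduces to the local rules on A-paths a a' a'' of length two: in
   these terms phi2 \o phi1 = phi3 says loc2 (loc1 a a') (loc1 a' a'') = loc3 a a'.
   The relations R_i, S_i link consecutive symbols of the interleaved sequence
   x_0, y_0, z_0, x_1, y_1, z_1, ... with y = phi1 x and z = phi3 x, and every
   A-edge a a' factors uniquely as R_1 a b, S_1 b a' with b = loc1 a a'.  A
   product of {0,1}-matrices equals a {0,1}-matrix P iff each P-related pair is
   joined by exactly one two-step path; under the composition rule the middle
   symbol of such a path is forced by the local rules, and conversely the three
   identities let one chase it back along a path a a' a''.  As S_phi is the
   R-matrix of the inverse rule, and the composition rule for (phi1, phi2, phi3)
   implies the one for (phi2, phi3^-1, phi1^-1), the last two identities are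
   rotations of R_1 R_2 = R_3. *)

Definition essential (m : nat) (A : 'M[int]_m) : Prop :=
  (forall a, exists a', A a a' = 1) /\ (forall a', exists a, A a a' = 1).

Lemma essential_of_nondeg (m : nat) (A : 'M[int]_m) :
  zero_one A -> nondeg_mx A -> essential A.
Proof.
move=> A01 [Arow Acol].
have one_of_nz a a' : A a a' != 0 -> A a a' = 1 by case: (A01 a a') => ->; rewrite ?eqxx.
split=> [a|a'].
- by have [a' nz] := Arow a; exists a'; exact: one_of_nz.
- by have [a nz] := Acol a'; exists a; exact: one_of_nz.
Qed.

Lemma inX_path3 (m : nat) (A : 'M[int]_m) a b c :
  essential A -> A a b = 1 -> A b c = 1 ->
  exists x, [/\ inX A x, x 0 = a, x 1 = b & x 2 = c].
Proof.
move=> [/fin_all_exists[next Anext] /fin_all_exists[prev Aprev]] Aab Abc.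
pose x : pt m := fun l => match l with
  | Posz 0 => a | Posz 1 => b | Posz k.+2 => iter k next c
  | Negz k => iter k.+1 prev a end.
exists x; split=> // -[[|[|k]]|[|k]].
- exact: Aab.
- exact: Abc.
- by rewrite -PoszD addn1; exact: Anext.
- by have -> : Negz 0 + 1 = 0 by []; exact: Aprev.
- have -> : Negz k.+1 + 1 = Negz k by rewrite !NegzE -addn1 PoszD opprD subrK.
  exact: Aprev.
Qed.

Definition recoding (m n : nat) (A : 'M[int]_m) (B : 'M[int]_n)
    (f : 'I_m -> 'I_m -> 'I_n) (g : 'I_n -> 'I_n -> 'I_m) : Prop :=
  forall a a' a'', A a a' = 1 -> A a' a'' = 1 ->
    B (f a a') (f a' a'') = 1 /\ g (f a a') (f a' a'') = a'.

Definition local_conj (m n : nat) (A : 'M[int]_m) (B : 'M[int]_n)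
    (f : 'I_m -> 'I_m -> 'I_n) (g : 'I_n -> 'I_n -> 'I_m) : Prop :=
  recoding A B f g /\ recoding B A g f.

Lemma local_conj_sym (m n : nat) (A : 'M[int]_m) (B : 'M[int]_n) f g :
  local_conj A B f g -> local_conj B A g f.
Proof. by case. Qed.

Lemma elementary_local_conj (m n : nat) (A : 'M[int]_m) (B : 'M[int]_n) phi f g :
  essential A -> essential B -> elementary A B phi f g -> local_conj A B f g.
Proof.
move=> eA eB [[phiB _ _ [psi [psiA _ phipsi _]]] phiE psiE]; split.
- move=> a a' a'' Aaa' Aa'a''.
  have [x [xA x0 x1 x2]] := inX_path3 eA Aaa' Aa'a''.
  have <- : phi x 0 = f a a' by rewrite phiE // add0r x0 x1.
  have <- : phi x 1 = f a' a'' by rewrite phiE // x1 x2.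
  split; first by have := phiB x xA 0; rewrite add0r.
  by rewrite -x1 (psiE x xA 1).
- move=> b b' b'' Bbb' Bb'b''.
  have [y [yB y0 y1 y2]] := inX_path3 eB Bbb' Bb'b''.
  have xA : inX A (psi y) := psiA y yB.
  have phix i : phi (psi y) i = y i := phipsi y yB i.
  have <- : psi y 1 = g b b' by rewrite (psiE _ xA 1) !phix y0 y1.
  have <- : psi y 2 = g b' b'' by rewrite (psiE _ xA 2) !phix y1 y2.
  split; first exact: xA 1.
  by rewrite -(phiE _ xA 1) phix.
Qed.

Definition local_comp (m n p : nat) (A : 'M[int]_m) (f1 : 'I_m -> 'I_m -> 'I_n)
    (f2 : 'I_n -> 'I_n -> 'I_p) (f3 : 'I_m -> 'I_m -> 'I_p) : Prop :=
  forall a a' a'', A a a' = 1 -> A a' a'' = 1 -> f2 (f1 a a') (f1 a' a'') = f3 a a'.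

Lemma elementary_compE (m n p : nat) (A : 'M[int]_m) (B : 'M[int]_n) (C : 'M[int]_p)
    phi1 f1 g1 phi2 f2 g2 phi3 f3 g3 :
  essential A -> elementary A B phi1 f1 g1 -> elementary B C phi2 f2 g2 ->
  elementary A C phi3 f3 g3 ->
  (forall x, inX A x -> forall i, phi2 (phi1 x) i = phi3 x i) <-> local_comp A f1 f2 f3.
Proof.
move=> eA [[phi1B _ _ _] phi1E _] [_ phi2E _] [_ phi3E _].
have phi21E x : inX A x -> forall i,
    phi2 (phi1 x) i = f2 (f1 (x i) (x (i + 1))) (f1 (x (i + 1)) (x (i + 1 + 1))).
  by move=> xA i; rewrite phi2E ?phi1E //; exact: phi1B.
split=> [comp a a' a'' Aaa' Aa'a'' | comp x xA i].
- have [x [xA x0 x1 x2]] := inX_path3 eA Aaa' Aa'a''.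
  by have := comp x xA 0; rewrite phi21E // phi3E // add0r x0 x1 x2.
- by rewrite phi21E // phi3E //; exact: comp.
Qed.

Lemma card_eq_bool (T : finType) (P : pred T) (b : bool) :
  #|P| = b <-> (b <-> exists t, P t) /\ (forall t t', P t -> P t' -> t = t').
Proof.
split=> [cardP | [bP uniqP]].
- case: b cardP => [/mem_card1[t Pt] | /card0_eq P0].
    have Pt' u : P u = (u == t) by exact: (Pt u).
    split=> [|u u']; first by split=> // _; exists t; rewrite Pt'.
    by rewrite !Pt' => /eqP-> /eqP->.
  have P0' u : P u = false by rewrite -[P u]/(u \in P) P0.
  by split=> [|u u']; [split=> // -[u]|]; rewrite P0'.
- case: b bP => bP.
    apply/eqP; rewrite eqn_leq; apply/andP; split.
      by apply/card_le1_eqP => t t' Pt Pt'; exact: uniqP Pt' Pt.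
    by have [t Pt] := bP.1 isT; apply/card_gt0P; exists t.
  apply: eq_card0 => t; rewrite !inE; apply/negbTE/negP => Pt.
  by have := bP.2 (ex_intro _ t Pt).
Qed.

Definition boolmx (k l : nat) (P : 'I_k -> 'I_l -> bool) : 'M[int]_(k, l) :=
  \matrix_(i, j) if P i j then 1 else 0.

Lemma boolmx_mulE (k l r : nat) (P : 'I_k -> 'I_l -> bool) (Q : 'I_l -> 'I_r -> bool) i j :
  (boolmx P *m boolmx Q) i j = #|[pred t | P i t && Q t j]|%:Z.
Proof.
rewrite mxE (eq_bigr (fun t => if P i t && Q t j then 1 else 0)); last first.
  by move=> t _; rewrite !mxE; case: (P i t); case: (Q t j); rewrite ?mulr1 ?mulr0.
by rewrite -big_mkcond sumr_const -natz -mulr_natl mulr1.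
Qed.

Lemma boolmx_mul_eq (k l r : nat) (P : 'I_k -> 'I_l -> bool) (Q : 'I_l -> 'I_r -> bool)
    (S : 'I_k -> 'I_r -> bool) :
  boolmx P *m boolmx Q = boolmx S <-> forall i j, #|[pred t | P i t && Q t j]| = S i j.
Proof.
split=> [PQ i j | cardPQ]; last first.
  by apply/matrixP=> i j; rewrite boolmx_mulE cardPQ mxE; case: (S i j).
apply/eqP; rewrite -eqz_nat -boolmx_mulE PQ mxE.
by case: (S i j).
Qed.

Definition Rrel (m n : nat) (A : 'M[int]_m) (f : 'I_m -> 'I_m -> 'I_n) a b : bool :=
  [exists a', (A a a' == 1) && (f a a' == b)].

Lemma RrelP (m n : nat) (A : 'M[int]_m) (f : 'I_m -> 'I_m -> 'I_n) a b :
  reflect (exists2 a', A a a' = 1 & f a a' = b) (Rrel A f a b).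
Proof.
apply: (iffP existsP) => [[a' /andP[/eqP Aaa' /eqP fab]] | [a' Aaa' fab]].
  by exists a'.
by exists a'; rewrite Aaa' fab !eqxx.
Qed.

Lemma Rmat_boolmx (m n : nat) (A : 'M[int]_m) (f : 'I_m -> 'I_m -> 'I_n) :
  Rmat A f = boolmx (Rrel A f).
Proof. by []. Qed.

Lemma Smat_boolmx (m n : nat) (B : 'M[int]_n) (g : 'I_n -> 'I_n -> 'I_m) :
  Smat B g = boolmx (Rrel B g).
Proof. by []. Qed.

Section BlockConj.
Variables (m n : nat) (A : 'M[int]_m) (B : 'M[int]_n).
Variables (f : 'I_m -> 'I_m -> 'I_n) (g : 'I_n -> 'I_n -> 'I_m).
Hypotheses (eA : essential A) (fg : local_conj A B f g).

Lemma RS_of_edge a a' : A a a' = 1 -> Rrel A f a (f a a') && Rrel B g (f a a') a'.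
Proof.
move=> Aaa'; have [a'' Aa'a''] := eA.1 a'.
have [Bff gff] := fg.1 _ _ _ Aaa' Aa'a''.
by apply/andP; split; apply/RrelP; [exists a' | exists (f a' a'')].
Qed.

Lemma edge_of_RS a b a' : Rrel A f a b -> Rrel B g b a' -> A a a' = 1 /\ f a a' = b.
Proof.
case/RrelP=> a1 Aaa1 <- /RrelP[b1 Bbb1 <-]; have [a0 Aa0a] := eA.2 a.
have [Bff gff] := fg.1 _ _ _ Aa0a Aaa1.
by have := fg.2 _ _ _ Bff Bbb1; rewrite gff.
Qed.

End BlockConj.

Section Triangle.
Variables (m n p : nat) (A : 'M[int]_m) (B : 'M[int]_n) (C : 'M[int]_p).
Variables (f1 : 'I_m -> 'I_m -> 'I_n) (g1 : 'I_n -> 'I_n -> 'I_m).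
Variables (f2 : 'I_n -> 'I_n -> 'I_p) (g2 : 'I_p -> 'I_p -> 'I_n).
Variables (f3 : 'I_m -> 'I_m -> 'I_p) (g3 : 'I_p -> 'I_p -> 'I_m).
Hypotheses (eA : essential A) (eB : essential B) (eC : essential C).
Hypotheses (fg1 : local_conj A B f1 g1) (fg2 : local_conj B C f2 g2).
Hypothesis (fg3 : local_conj A C f3 g3).

Lemma local_comp_rotate : local_comp A f1 f2 f3 -> local_comp B f2 g3 g1.
Proof.
move=> comp b b' b'' Bbb' Bb'b''.
have [b0 Bb0b] := eB.2 b; have [b3 Bb''b3] := eB.1 b''.
have [A01 e01] := fg1.2 _ _ _ Bb0b Bbb'.
have [A12 e12] := fg1.2 _ _ _ Bbb' Bb'b''.
have [A23 e23] := fg1.2 _ _ _ Bb'b'' Bb''b3.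
have -> : f2 b b' = f3 (g1 b0 b) (g1 b b') by rewrite -(comp _ _ _ A01 A12) e01 e12.
have -> : f2 b' b'' = f3 (g1 b b') (g1 b' b'') by rewrite -(comp _ _ _ A12 A23) e12 e23.
exact: (fg3.1 _ _ _ A01 A12).2.
Qed.

Lemma card_Rrel_comp : local_comp A f1 f2 f3 ->
  forall a c, #|[pred b | Rrel A f1 a b && Rrel B f2 b c]| = Rrel A f3 a c.
Proof.
move=> comp a c; have [a0 Aa0a] := eA.2 a.
have mid b : Rrel A f1 a b -> Rrel B f2 b c -> b = g2 (f3 a0 a) c.
  move=> Rab Rbc; have /andP[_ Sy0a] := RS_of_edge eA fg1 Aa0a.
  have [By0b _] := edge_of_RS eB (local_conj_sym fg1) Sy0a Rab.
  have /andP[_ Sc0b] := RS_of_edge eB fg2 By0b.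
  have [_ <-] := edge_of_RS eC (local_conj_sym fg2) Sc0b Rbc.
  by case/RrelP: Rab => a'' Aaa'' <-; rewrite (comp _ _ _ Aa0a Aaa'').
apply/card_eq_bool; split=> [|b b' /andP[Rab Rbc] /andP[Rab' Rb'c]]; last first.
  by rewrite (mid b) // (mid b').
split=> [/RrelP[a' Aaa' <-] | [b /andP[Rab /RrelP[b1 Bbb1 <-]]]].
  have [a'' Aa'a''] := eA.1 a'; have [Bff _] := fg1.1 _ _ _ Aaa' Aa'a''.
  exists (f1 a a'); apply/andP; split; apply/RrelP; first by exists a'.
  by exists (f1 a' a''); rewrite ?comp.
have /andP[Sba' Ra'b1] := RS_of_edge eB (local_conj_sym fg1) Bbb1.
have [Aaa' fab] := edge_of_RS eA fg1 Rab Sba'.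
case/RrelP: Ra'b1 => a'' Aa'a'' fb1; apply/RrelP; exists (g1 b b1) => //.
by rewrite -(comp _ _ _ Aaa' Aa'a'') fab fb1.
Qed.

Lemma local_comp_of_Rrel :
  (forall a b c, Rrel A f1 a b -> Rrel B f2 b c -> Rrel A f3 a c) ->
  (forall b c a, Rrel B f2 b c -> Rrel C g3 c a -> Rrel B g1 b a) ->
  (forall c b, Rrel C g2 c b -> exists2 a, Rrel C g3 c a & Rrel A f1 a b) ->
  local_comp A f1 f2 f3.
Proof.
move=> R12 R23 R31 a a' a'' Aaa' Aa'a''.
have [Byy' gyy'] := fg1.1 _ _ _ Aaa' Aa'a''.
have /andP[Ray _] := RS_of_edge eA fg1 Aaa'.
have Ryc : Rrel B f2 (f1 a a') (f2 (f1 a a') (f1 a' a'')) by apply/RrelP; exists (f1 a' a'').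
have /andP[_ Scy'] := RS_of_edge eB fg2 Byy'.
have [a1 Sca1 Ra1y'] := R31 _ _ Scy'.
have [_ ga1] := edge_of_RS eB (local_conj_sym fg1) (R23 _ _ _ Ryc Sca1) Ra1y'.
rewrite gyy' in ga1; rewrite -ga1 in Sca1.
by have [_ ->] := edge_of_RS eA fg3 (R12 _ _ _ Ray Ryc) Sca1.
Qed.
End Triangle.

Lemma local_comp_mulmxE (m n p : nat) (A : 'M[int]_m) (B : 'M[int]_n) (C : 'M[int]_p)
    f1 g1 f2 g2 f3 g3 :
  essential A -> essential B -> essential C ->
  local_conj A B f1 g1 -> local_conj B C f2 g2 -> local_conj A C f3 g3 ->
  local_comp A f1 f2 f3 <->
  [/\ Rmat A f1 *m Rmat B f2 = Rmat A f3,
      Rmat B f2 *m Smat C g3 = Smat B g1 &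
      Smat C g3 *m Rmat A f1 = Smat C g2].
Proof.
move=> eA eB eC fg1 fg2 fg3.
have gf1 := local_conj_sym fg1; have gf3 := local_conj_sym fg3.
rewrite !Rmat_boolmx !Smat_boolmx.
split=> [comp | [/boolmx_mul_eq E12 /boolmx_mul_eq E23 /boolmx_mul_eq E31]].
  have comp' := local_comp_rotate eB fg1 fg3 comp.
  have comp'' := local_comp_rotate eC fg2 gf1 comp'.
  split; apply/boolmx_mul_eq.
  - exact: card_Rrel_comp eA eB eC fg1 fg2 comp.
  - exact: card_Rrel_comp eB eC eA fg2 gf3 comp'.
  - exact: card_Rrel_comp eC eA eB gf3 fg1 comp''.
apply: (local_comp_of_Rrel eA eB fg1 fg2 fg3).
- move=> a b c Rab Rbc; have [[_ Rac] _] := (card_eq_bool _ _).1 (E12 a c).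
  by apply: Rac; exists b; rewrite /= Rab.
- move=> b c a Rbc Rca; have [[_ Rba] _] := (card_eq_bool _ _).1 (E23 b a).
  by apply: Rba; exists c; rewrite /= Rbc.
- move=> c b Rcb; have [[/(_ Rcb)[a /andP[Rca Rab]] _] _] := (card_eq_bool _ _).1 (E31 c b).
  by exists a.
Qed.

Theorem mainTheorem11 (m n p : nat)
  (A : 'M[int]_m) (B : 'M[int]_n) (C : 'M[int]_p)
  (hA01 : zero_one A) (hB01 : zero_one B) (hC01 : zero_one C)
  (hA : nondeg_mx A) (hB : nondeg_mx B) (hC : nondeg_mx C)
  (phi1 : pt m -> pt n) (loc1 : 'I_m -> 'I_m -> 'I_n) (iloc1 : 'I_n -> 'I_n -> 'I_m)
  (phi2 : pt n -> pt p) (loc2 : 'I_n -> 'I_n -> 'I_p) (iloc2 : 'I_p -> 'I_p -> 'I_n)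
  (phi3 : pt m -> pt p) (loc3 : 'I_m -> 'I_m -> 'I_p) (iloc3 : 'I_p -> 'I_p -> 'I_m)
  (h1 : elementary A B phi1 loc1 iloc1)
  (h2 : elementary B C phi2 loc2 iloc2)
  (h3 : elementary A C phi3 loc3 iloc3) :
  (forall x, inX A x -> forall i, phi2 (phi1 x) i = phi3 x i) <->
  [/\ Rmat A loc1 *m Rmat B loc2 = Rmat A loc3,
      Rmat B loc2 *m Smat C iloc3 = Smat B iloc1 &
      Smat C iloc3 *m Rmat A loc1 = Smat C iloc2].
Proof.
have eA := essential_of_nondeg hA01 hA; have eB := essential_of_nondeg hB01 hB.
have eC := essential_of_nondeg hC01 hC.
apply: iff_trans (elementary_compE eA h1 h2 h3) _.
exact: local_comp_mulmxE eA eB eC (elementary_local_conj eA eB h1)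
  (elementary_local_conj eB eC h2) (elementary_local_conj eA eC h3).
Qed.
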